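(* Let $\sigma>0$, $r\in\mathbb{R}$, $A>0$ and $B>0$, and consider the system of ODEs \[ \dot{x}_d = X,\quad \dot{X}=\sigma\big(Y-X+A\sin(Bx_d)\big),\quad \dot{Y}=-XZ+rX-Y,\quad \dot{Z}=XY-Z . \] Let $k$ be an odd integer and consider the equilibrium $(x_d,X,Y,Z)=(k\pi/B,0,0,0)$. The eigenvalues of the Jacobian at this equilibrium are $-1$ together with the roots of the cubic $\lambda^3+(\sigma+1)\lambda^2+\sigma(1-r+AB)\lambda+AB\sigma$. Define \[ r_c = 1+AB\,\frac{\sigma}{\sigma+1}. \] Then: (i) if all roots of the cubic are real, they are all negative when $r<1+AB$, while when $r>1+AB$ two of them are positive; (ii) if the cubic has a pair of non-real complex conjugate roots, then its remaining real root is negative, and the complex conjugate pair has negative real part when $r<r_c$ and positive real part when $r>r_c$; (iii) at $r=r_c$ the cubic has a pair of purely imaginary roots $\pm i\omega$ with $\omega^2 = AB\,\sigma/(\sigma+1)$.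
   Context: The system models a one-dimensional wave-particle entity (a walking droplet) in the sinusoidal potential $U(x)=(A/B)\cos(Bx)$: $x_d$ is the particle position, $X$ its velocity, and $Y,Z$ are wave-memory variables. The equilibria with odd $k$ correspond to the particle sitting at the minima of the potential. *)

From mathcomp Require Import all_boot all_algebra.
From mathcomp Require Import all_classical all_reals all_analysis.
From mathcomp Require Export complex.
Export ComplexField.
Import GRing.Theory Num.Theory.
Local Open Scope ring_scope.

Definition wpe_field {R : realType} (sigma r A B : R) (u : 'rV[R]_4) : 'rV[R]_4 :=
  let xd := u ord0 (@inord 3 0) in
  let X  := u ord0 (@inord 3 1) in
  let Y  := u ord0 (@inord 3 2) in
  let Z  := u ord0 (@inord 3 3) in
  \row_(i < 4)
    [:: X;
        sigma * (Y - X + A * sin (B * xd));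
        - (X * Z) + r * X - Y;
        X * Y - Z]`_i.

Definition wpe_equil {R : realType} (B : R) (k : int) : 'rV[R]_4 :=
  \row_(i < 4) (if i == 0 :> nat then k%:~R * pi / B else 0).

Definition jacobian4 {R : realType} (f : 'rV[R]_4 -> 'rV[R]_4) (p : 'rV[R]_4)
  : 'M[R]_4 :=
  \matrix_(i < 4, j < 4)
     derive1 (fun t : R => f (p + t *: delta_mx 0 j) 0 i) 0.

Definition wpe_cubic {R : realType} (sigma r A B : R) : {poly R} :=
  'X^3 + (sigma + 1)%:P * 'X^2 + (sigma * (1 - r + A * B))%:P * 'X
  + (A * B * sigma)%:P.

Definition wpe_cubicC {R : realType} (sigma r A B : R) : {poly R[i]} :=
  map_poly (fun x : R => x%:C%C) (wpe_cubic sigma r A B).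

Definition wpe_rc {R : realType} (sigma A B : R) : R :=
  1 + A * B * (sigma / (sigma + 1)).

From mathcomp Require Import all_boot all_algebra.
From mathcomp Require Import all_classical all_reals all_analysis.
From mathcomp Require Import complex.
From mathcomp Require Import ring lra.
Import ComplexField.
Import order.Order.TTheory GRing.Theory Num.Theory.
Local Open Scope ring_scope.

(* Every equilibrium has X = Y = Z = 0, and there the Z-row of the Jacobian
   decouples, giving the eigenvalue -1; for odd k, cos (k pi) = -1 and the
   remaining 3 x 3 block has characteristic polynomial
   p = X^3 + a2 X^2 + a1 X + a0 with a2 = sigma + 1, a1 = sigma (1 - r + AB)
   and a0 = AB sigma > 0.
   A real root of p is negative whenever its coefficients are nonnegative; if
   r > 1 + AB then a1 < 0, and a1 < 0 < a0 leaves exactly one negative root.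
   A non-real root x + iy yields p(t) = (t + a2 + 2x) ((t - x)^2 + y^2), so the
   real root -a2 - 2x is negative since a0 > 0, and
   a2 a1 - a0 = -2x ((a2 + x)^2 + y^2): the real part x has the sign opposite to
   the Hurwitz quantity a2 a1 - a0 = sigma (sigma + 1) (r_c - r). At r = r_c it
   vanishes, p = (X + a2) (X^2 + a1), and its roots include +- i sqrt a1. *)

Lemma count_pos_of_vieta (R : realDomainType) (a b c : R) :
  a * b + b * c + c * a < 0 -> a * b * c < 0 ->
  ((0 < a)%R + (0 < b)%R + (0 < c)%R)%N = 2%N.
Proof.
move=> e1 e0.
case: (ltrP 0 a) => ha; case: (ltrP 0 b) => hb; case: (ltrP 0 c) => hc //=; exfalso.
- nra.
- have : 0 <= b * c by nra.
  nra.
- have : 0 <= c * a by nra.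
  nra.
- have : 0 <= a * b by nra.
  nra.
- nra.
Qed.

Definition cubic {R : nzRingType} (a2 a1 a0 : R) : {poly R} :=
  'X^3 + a2%:P * 'X^2 + a1%:P * 'X + a0%:P.

(* The discriminant of the quadratic [cubic a2 a1 a0 %/ ('X - c%:P)] when [c] is a root. *)
Definition deflated_disc {R : nzRingType} (a2 a1 c : R) : R :=
  (a2 + c) ^+ 2 - 4%:R * (a1 + a2 * c + c ^+ 2).

Section MonicCubic.
Context {R : rcfType} {a2 a1 a0 : R}.

Lemma Re_complex_lt0 (x y : R) : ('Re (x +i* y)%C < 0) = (x < 0).
Proof. by rewrite -complexRe ltcR. Qed.

Lemma Re_complex_gt0 (x y : R) : (0 < 'Re (x +i* y)%C) = (0 < x).
Proof. by rewrite -complexRe ltcR. Qed.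

Lemma Im_complex_eq0 (x y : R) : ('Im (x +i* y)%C == 0) = (y == 0).
Proof. by rewrite -complexIm eq_complex /= eqxx andbT. Qed.

Local Notation cubic := (cubic a2 a1 a0).
Local Notation cubicC := (map_poly (fun x : R => x%:C%C) cubic).
Local Notation deflated_disc := (deflated_disc a2 a1).

Lemma horner_cubic t : cubic.[t] = t ^+ 3 + a2 * t ^+ 2 + a1 * t + a0.
Proof. by rewrite !hornerE. Qed.

Lemma size_cubic_gt3 : (3 < size cubic)%N.
Proof.
rewrite -[size _]/(size (polyseq cubic)) ltnNge; apply/negP => /(nth_default 0).
by rewrite !coefD !coefCM !coefXn coefX coefC /= !mulr0 !addr0 => /eqP; rewrite oner_eq0.
Qed.

Lemma root_cubicC x y : root cubicC (x +i* y)%C =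
  (x ^+ 3 - 3%:R * x * y ^+ 2 + a2 * (x ^+ 2 - y ^+ 2) + a1 * x + a0 == 0)
  && (y * (3%:R * x ^+ 2 - y ^+ 2 + 2%:R * a2 * x + a1) == 0).
Proof.
rewrite rootE -/(map_poly (real_complex R) _) !rmorphD !rmorphM /= map_polyX !map_polyC !hornerE /=.
simpc; rewrite eq_complex /=.
by congr andb; congr eq_op; ring.
Qed.

Lemma cubic_vieta a b c :
  a + b + c = - a2 -> a * b + b * c + c * a = a1 -> a * b * c = - a0 ->
  cubic = ('X - a%:P) * ('X - b%:P) * ('X - c%:P).
Proof.
move=> e2 e1 e0; rewrite /cubic -[a2]opprK -e2 -e1 -[a0]opprK -e0.
rewrite !(polyCN, polyCD, polyCM); ring.
Qed.

Lemma root_cubicC_real x : root cubicC (x +i* 0)%C = root cubic x.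
Proof. exact: (fmorph_root (real_complex R)). Qed.

Lemma cubic_real_root_Re_lt0 {z} : root cubicC z -> 'Im z = 0 ->
  0 <= a2 -> 0 <= a1 -> 0 < a0 -> 'Re z < 0.
Proof.
case: z => x y + /eqP; rewrite Im_complex_eq0 => + /eqP y0 a2_ge0 a1_ge0 a0_gt0.
rewrite {}y0 root_cubicC_real Re_complex_lt0 rootE horner_cubic => /eqP xroot.
rewrite ltNge; apply/negP => x_ge0.
have : 0 <= x ^+ 3 + a2 * x ^+ 2 + a1 * x by rewrite !addr_ge0 ?mulr_ge0 ?exprn_ge0.
lra.
Qed.

Lemma cubic_nonreal_factor {x y : R} : y != 0 -> root cubicC (x +i* y)%C ->
  (forall t, cubic.[t] = (t + a2 + 2%:R * x) * ((t - x) ^+ 2 + y ^+ 2))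
  /\ a2 * a1 - a0 = - (2%:R * x) * ((a2 + x) ^+ 2 + y ^+ 2).
Proof.
move=> y_neq0; rewrite root_cubicC => /andP[/eqP re0].
rewrite mulf_eq0 (negbTE y_neq0) => /eqP im0.
have a1E : a1 = y ^+ 2 - 3%:R * x ^+ 2 - 2%:R * a2 * x by rewrite -[a1]subr0 -im0; ring.
have a0E : a0 = - (x ^+ 3 - 3%:R * x * y ^+ 2 + a2 * (x ^+ 2 - y ^+ 2) + a1 * x).
  by rewrite -[a0]subr0 -re0; ring.
by split=> [t|]; rewrite ?horner_cubic a0E a1E; ring.
Qed.

Lemma cubic_nonreal_real_root_lt0 :
  (exists z, root cubicC z /\ 'Im z != 0) -> 0 < a0 -> forall t, root cubic t -> t < 0.
Proof.
move=> [[x y] [zroot]]; rewrite Im_complex_eq0 => y_neq0 a0_gt0 t.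
have [cubicE _] := cubic_nonreal_factor y_neq0 zroot.
have sqr_sum_gt0 s : 0 < (s - x) ^+ 2 + y ^+ 2.
  by rewrite ltr_wpDl ?sqr_ge0 // exprn_even_gt0.
have shift_gt0 : 0 < a2 + 2%:R * x.
  by rewrite -(pmulr_lgt0 _ (sqr_sum_gt0 0)) -[a2]add0r -cubicE horner_cubic; lra.
rewrite rootE cubicE mulf_eq0 (gt_eqF (sqr_sum_gt0 t)) orbF => /eqP; lra.
Qed.

Lemma cubic_nonreal_root_Re {z} : root cubicC z -> 'Im z != 0 ->
  (0 < a2 * a1 - a0 -> 'Re z < 0) /\ (a2 * a1 - a0 < 0 -> 0 < 'Re z).
Proof.
case: z => x y; rewrite Im_complex_eq0 Re_complex_lt0 Re_complex_gt0 => zroot y_neq0.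
have [_ ->] := cubic_nonreal_factor y_neq0 zroot.
have : 0 < (a2 + x) ^+ 2 + y ^+ 2 by rewrite ltr_wpDl ?sqr_ge0 // exprn_even_gt0.
by split; nra.
Qed.

Lemma cubic_imaginary_roots : 0 <= a1 -> a2 * a1 = a0 ->
  root cubicC ((Num.sqrt a1)%:C * 'i)%C /\ root cubicC (- ((Num.sqrt a1)%:C * 'i))%C.
Proof.
move=> a1_ge0 a0E.
have root_iw w : w ^+ 2 = a1 -> root cubicC (0 +i* w)%C.
  by move=> w2E; rewrite root_cubicC -a0E -w2E; apply/andP; split; apply/eqP; ring.
have -> : ((Num.sqrt a1)%:C * 'i)%C = (0 +i* Num.sqrt a1)%C by simpc.
have -> : (- (0 +i* Num.sqrt a1))%C = (0 +i* - Num.sqrt a1)%C by simpc.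
by split; apply: root_iw; rewrite ?sqrrN sqr_sqrtr.
Qed.

Lemma cubic_split_of_root {c : R} : root cubic c -> 0 <= deflated_disc c ->
  exists a b, [/\ a + b + c = - a2, a * b + b * c + c * a = a1 & a * b * c = - a0].
Proof.
rewrite rootE horner_cubic => /eqP croot disc_ge0.
set D := deflated_disc c in disc_ge0 *.
have sqrtE : Num.sqrt D ^+ 2 = D by rewrite sqr_sqrtr.
pose a := (- (a2 + c) - Num.sqrt D) / 2%:R.
pose b := (- (a2 + c) + Num.sqrt D) / 2%:R.
have sumE : a + b = - (a2 + c) by rewrite /a /b; field.
have prodE : a * b = ((a2 + c) ^+ 2 - D) / 4%:R by rewrite -[in RHS]sqrtE /a /b; field.
have a0E : a0 = - (c ^+ 3 + a2 * c ^+ 2 + a1 * c) by rewrite -[a0]subr0 -croot; ring.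
exists a, b; split.
- by rewrite sumE; ring.
- rewrite (_ : a * b + b * c + c * a = a * b + c * (a + b)); last by ring.
  by rewrite prodE sumE /D /deflated_disc; field.
- by rewrite prodE /D /deflated_disc a0E; field.
Qed.

Lemma cubic_nonreal_of_root {c : R} : root cubic c -> deflated_disc c < 0 ->
  exists z, root cubicC z /\ 'Im z != 0.
Proof.
rewrite rootE horner_cubic => /eqP croot disc_lt0.
set y := Num.sqrt (- deflated_disc c) / 2%:R.
have y2E : y ^+ 2 = - deflated_disc c / 4%:R.
  by rewrite expr_div_n sqr_sqrtr ?oppr_ge0 ?ltW //; field.
have a0E : a0 = - (c ^+ 3 + a2 * c ^+ 2 + a1 * c) by rewrite -[a0]subr0 -croot; ring.
exists (- (a2 + c) / 2%:R +i* y)%C; split.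
- rewrite root_cubicC y2E a0E /deflated_disc.
  by apply/andP; split; apply/eqP; field.
- by rewrite Im_complex_eq0 gt_eqF // divr_gt0 // sqrtr_gt0 oppr_gt0.
Qed.

Lemma cubic_real_split : (forall z, root cubicC z -> 'Im z = 0) ->
  exists a b c, [/\ a + b + c = - a2, a * b + b * c + c * a = a1 & a * b * c = - a0].
Proof.
move=> real_roots.
have [[c y] zroot] : exists z, root cubicC z.
  apply/closed_rootP; rewrite size_map_poly.
  by apply: contraTneq size_cubic_gt3 => ->.
have y0 : y = 0 by apply/eqP; rewrite -(Im_complex_eq0 c) real_roots.
have croot : root cubic c by rewrite -root_cubicC_real -y0.
case: (ltrP (deflated_disc c) 0) => disc.
- have [z [zroot' z_nonreal]] := cubic_nonreal_of_root croot disc.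
  by rewrite real_roots ?eqxx in z_nonreal.
- by have [a [b vieta]] := cubic_split_of_root croot disc; exists a, b, c.
Qed.

End MonicCubic.

Lemma det_mx4 (R : comNzRingType) (f : nat -> nat -> R) :
  let minor x y z := f 1%N x * (f 2%N y * f 3%N z - f 2%N z * f 3%N y)
                   - f 1%N y * (f 2%N x * f 3%N z - f 2%N z * f 3%N x)
                   + f 1%N z * (f 2%N x * f 3%N y - f 2%N y * f 3%N x) in
  \det (\matrix_(i < 4, j < 4) f i j)
    = f 0%N 0%N * minor 1%N 2%N 3%N - f 0%N 1%N * minor 0%N 2%N 3%N
      + f 0%N 2%N * minor 0%N 1%N 3%N - f 0%N 3%N * minor 0%N 1%N 2%N.
Proof.
rewrite (expand_det_row _ 0) !big_ord_recl big_ord0 /cofactor.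
do 2!rewrite !(expand_det_row _ 0) !big_ord_recl !big_ord0 /cofactor.
rewrite !det_mx11 !mxE /=.
ring.
Qed.

Lemma modz2_absz (k : int) : (k %% 2)%Z = odd `|k|%N.
Proof.
case: k => n; first by rewrite modz_nat modn2.
by rewrite modNz_nat // modn2 /=; case: (odd n).
Qed.

Lemma cos_intmulpi (R : realType) (k : int) : cos (k%:~R * pi) = (-1) ^+ `|k|%N :> R.
Proof.
have cos_natmulpi n : cos (n%:R * pi) = (-1) ^+ n :> R.
  by rewrite mulr_natl -[pi *+ n]add0r (alternatingn (@cosDpi R)) cos0 mulr1.
case: k => n; first exact: cos_natmulpi.
by rewrite NegzE mulrNz mulNr cosN cos_natmulpi.
Qed.

Lemma cos_odd_mulpi (R : realType) (k : int) :
  (k %% 2)%Z = 1 -> cos (k%:~R * pi) = -1 :> R.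
Proof. by rewrite modz2_absz cos_intmulpi -signr_odd => -[->]. Qed.

Section Linearization.
Variables (R : realType) (sigma r A B : R).

Definition wpe_jacobian_rows (u : 'rV[R]_4) : seq (seq R) :=
  let xd := u ord0 (@inord 3 0) in
  let X  := u ord0 (@inord 3 1) in
  let Y  := u ord0 (@inord 3 2) in
  let Z  := u ord0 (@inord 3 3) in
  [:: [:: 0; 1; 0; 0];
      [:: sigma * A * B * cos (B * xd); - sigma; sigma; 0];
      [:: 0; r - Z; -1; - X];
      [:: 0; Y; X; -1]].

Definition wpe_jacobian (u : 'rV[R]_4) : 'M[R]_4 :=
  \matrix_(i < 4, j < 4) nth 0 (nth [::] (wpe_jacobian_rows u) i) j.

Lemma jacobian4_wpe_field (u : 'rV[R]_4) :
  jacobian4 (wpe_field sigma r A B) u = wpe_jacobian u.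
Proof.
apply/matrixP => i j; rewrite !mxE.
set d := fun n : nat => (j == n :> nat)%:R : R.
set c := fun n : nat => u ord0 (@inord 3 n).
have shiftE n t : (n < 4)%N -> (u + t *: delta_mx 0 j) ord0 (@inord 3 n) = c n + t * d n.
  by move=> hn; rewrite !mxE eqxx /= -val_eqE /= inordK // eq_sym.
have -> : (fun t => wpe_field sigma r A B (u + t *: delta_mx 0 j) 0 i)
  = (fun t => [:: c 1%N + t * d 1%N;
       sigma * ((c 2%N + t * d 2%N) - (c 1%N + t * d 1%N)
                + A * sin (B * (c 0%N + t * d 0%N)));
       - ((c 1%N + t * d 1%N) * (c 3%N + t * d 3%N)) + r * (c 1%N + t * d 1%N)
         - (c 2%N + t * d 2%N);
       (c 1%N + t * d 1%N) * (c 2%N + t * d 2%N) - (c 3%N + t * d 3%N)]`_i).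
  by apply/funext => t; rewrite /wpe_field mxE !shiftE.
rewrite derive1E; case: i => [[|[|[|[|//]]]] hi] /=; rewrite derive_val.
all: clear shiftE; rewrite {}/d {}/c; case: j => [[|[|[|[|//]]]] hj] /=.
all: by rewrite /GRing.scale /= ?(mul0r, addr0); ring.
Qed.

Lemma char_poly_wpe_jacobian (u : 'rV[R]_4) :
  u ord0 (@inord 3 1) = 0 -> u ord0 (@inord 3 2) = 0 -> u ord0 (@inord 3 3) = 0 ->
  let g := sigma * A * B * cos (B * u ord0 (@inord 3 0)) in
  char_poly (wpe_jacobian u) = ('X + 1) * cubic (sigma + 1) (sigma * (1 - r) - g) (- g).
Proof.
move=> X0 Y0 Z0 g; rewrite /char_poly /char_poly_mx.
pose f i j := 'X *+ (i == j) - (nth 0 (nth [::] (wpe_jacobian_rows u) i) j)%:P.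
have -> : 'X%:M - map_mx polyC (wpe_jacobian u) = \matrix_(i < 4, j < 4) f i j.
  by apply/matrixP => i j; rewrite !mxE.
rewrite det_mx4 /f /= X0 Y0 Z0 -/g /cubic.
rewrite !(polyCN, polyCB, polyCM, polyC0, polyC1).
ring.
Qed.

Lemma wpe_cubicE :
  wpe_cubic sigma r A B = cubic (sigma + 1) (sigma * (1 - r + A * B)) (A * B * sigma).
Proof. by []. Qed.

Lemma char_poly_wpe_equil (k : int) : B != 0 -> (k %% 2)%Z = 1 ->
  char_poly (jacobian4 (wpe_field sigma r A B) (wpe_equil B k))
    = ('X + 1) * wpe_cubic sigma r A B.
Proof.
move=> B_neq0 k_odd.
have equilE n : (n < 4)%N ->
    wpe_equil B k ord0 (@inord 3 n) = if n == 0%N then k%:~R * pi / B else 0.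
  by move=> n_lt4; rewrite mxE inordK.
rewrite jacobian4_wpe_field char_poly_wpe_jacobian ?equilE //=.
rewrite mulrCA divff // mulr1 cos_odd_mulpi // wpe_cubicE.
by congr (_ * cubic _ _ _); ring.
Qed.

End Linearization.

Theorem mainTheorem2 (R : realType) (sigma r A B : R) (k : int)
  (hsigma : 0 < sigma) (hA : 0 < A) (hB : 0 < B) (hk : (k %% 2)%Z = 1) :
  (* eigenvalues of the Jacobian: -1 and the roots of the cubic *)
  char_poly (jacobian4 (wpe_field sigma r A B) (wpe_equil B k))
    = ('X + 1) * wpe_cubic sigma r A B
  (* (i) all roots real *)
  /\ ((forall z : R[i], root (wpe_cubicC sigma r A B) z -> Im z = 0) ->
        (r < 1 + A * B ->
           forall z : R[i], root (wpe_cubicC sigma r A B) z -> Re z < 0)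
     /\ (1 + A * B < r ->
           exists a b c : R,
             wpe_cubic sigma r A B = ('X - a%:P) * ('X - b%:P) * ('X - c%:P)
             /\ ((0 < a)%R + (0 < b)%R + (0 < c)%R)%N = 2%N))
  (* (ii) a pair of non-real complex conjugate roots *)
  /\ ((exists z : R[i], root (wpe_cubicC sigma r A B) z /\ Im z != 0) ->
        (forall x : R, root (wpe_cubic sigma r A B) x -> x < 0)
     /\ (forall z : R[i], root (wpe_cubicC sigma r A B) z -> Im z != 0 ->
           (r < wpe_rc sigma A B -> Re z < 0)
           /\ (wpe_rc sigma A B < r -> 0 < Re z)))
  (* (iii) Hopf point *)
  /\ (r = wpe_rc sigma A B ->
        exists omega : R, 0 < omega
          /\ omega ^+ 2 = A * B * sigma / (sigma + 1)
          /\ root (wpe_cubicC sigma r A B) (omega%:C * 'i)%C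
          /\ root (wpe_cubicC sigma r A B) (- (omega%:C * 'i))%C).
Proof.
have a0_gt0 : 0 < A * B * sigma by rewrite !mulr_gt0.
have hurwitzE : (sigma + 1) * (sigma * (1 - r + A * B)) - A * B * sigma
                = sigma * (sigma + 1) * (wpe_rc sigma A B - r).
  by rewrite /wpe_rc; field; rewrite gt_eqF // addr_gt0.
split; first exact: char_poly_wpe_equil (lt0r_neq0 hB) hk.
rewrite /wpe_cubicC !wpe_cubicE; split; [|split].
- move=> real_roots; split=> r_lt.
    by move=> z zroot; apply: (cubic_real_root_Re_lt0 zroot (real_roots z zroot)); nra.
  have [a [b [c [e2 e1 e0]]]] := cubic_real_split real_roots.
  exists a, b, c; split; first exact: cubic_vieta.
  by apply: count_pos_of_vieta; rewrite ?e1 ?e0; nra.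
- move=> nonreal; split; first exact: cubic_nonreal_real_root_lt0 nonreal a0_gt0.
  move=> z zroot z_nonreal; have := cubic_nonreal_root_Re zroot z_nonreal.
  by rewrite hurwitzE => -[Re_lt0 Re_gt0]; split=> r_cmp; [apply: Re_lt0 | apply: Re_gt0]; nra.
- move=> r_rc.
  have a1E : sigma * (1 - r + A * B) = A * B * sigma / (sigma + 1).
    by rewrite r_rc /wpe_rc; field; rewrite gt_eqF // addr_gt0.
  have a1_gt0 : 0 < sigma * (1 - r + A * B) by rewrite a1E divr_gt0 // addr_gt0.
  have hopfE : (sigma + 1) * (sigma * (1 - r + A * B)) = A * B * sigma.
    by apply/eqP; rewrite -subr_eq0 hurwitzE r_rc subrr mulr0.
  exists (Num.sqrt (sigma * (1 - r + A * B))).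
  rewrite sqrtr_gt0 sqr_sqrtr ?ltW //; do 2!split=> //.
  exact: cubic_imaginary_roots (ltW a1_gt0) hopfE.
Qed.
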